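(* For any group $A$, the assignment $q\mapsto\mathrm{Ker}(q)$ induces a bijection $$\bigsqcup_{B<A}\mathsf{Desc}^1(\mathsf T^l_{\imath_B},(B,m_B))\;\cong\;\mathsf{Fac}(A),$$ where $B$ ranges over proper subgroups of $A$ and $\imath_B:B\hookrightarrow A$ is the inclusion.
   Context: For a subgroup $B$ of $A$ with inclusion $\imath_B$, $\mathcal Z^1(\mathsf T^l_{\imath_B},(B,m_B))$ is identified with the set of maps $q:A\to B$ satisfying (ZL1) $q(1_A)=1_A$; (ZL2) $q(ba)=b\,q(a)$ for all $a\in A,b\in B$; (ZL3) $q(aa')=q(a\,q(a'))$ for all $a,a'\in A$ (exactly the algebra structures on the left $B$-set $B$ for the monad $A\otimes_B-$). $\mathsf{Desc}^1(\mathsf T^l_{\imath_B},(B,m_B))$ is its quotient by the relation $q\sim q'$ iff there is $b_0\in B$ with $q(a)b_0=q'(ab_0)$ for all $a\in A$ (isomorphism of the corresponding algebras). $\mathrm{Ker}(q)=\{a:q(a)=1_A\}$. $\mathsf{FAC}(A)$ is the set of pairs $(B,X)$ with $B$ a proper subgroup of $A$, $X$ a subgroup of $A$, $B\cap X=\{1_A\}$, $BX=A$; $\mathsf{Fac}(A)$ is its quotient by the equivalence $(B,X)\cong(B',X')$ iff $B=B'$ and $X,X'$ are conjugate in $A$. *)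

Set Implicit Arguments.

Record group := Group {
  gcar :> Type;
  gmul : gcar -> gcar -> gcar;
  gone : gcar;
  ginv : gcar -> gcar;
  gmulA : forall x y z, gmul x (gmul y z) = gmul (gmul x y) z;
  gmul1 : forall x, gmul gone x = x;
  gmulV : forall x, gmul (ginv x) x = gone
}.

Section Defs.
Variable A : group.
Local Notation "x * y" := (gmul A x y).
Local Notation "1" := (gone A).

Definition same_set (S T : A -> Prop) : Prop := forall x, S x <-> T x.

Definition subgroup (S : A -> Prop) : Prop :=
  S 1 /\ (forall x y, S x -> S y -> S (x * y)) /\ (forall x, S x -> S (ginv A x)).

Definition proper_subgroup (S : A -> Prop) : Prop :=
  subgroup S /\ exists a, ~ S a.

(* Z^1(T^l_{i_B}, (B, m_B)) : maps q : A -> B satisfying (ZL1)-(ZL3). *)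
Definition ZL (B : A -> Prop) (q : A -> A) : Prop :=
  (forall a, B (q a)) /\
  q 1 = 1 /\
  (forall a b, B b -> q (b * a) = b * q a) /\
  (forall a a', q (a * a') = q (a * q a')).

Definition desc_rel (B : A -> Prop) (q q' : A -> A) : Prop :=
  exists b0, B b0 /\ forall a, q a * b0 = q' (a * b0).

Definition Ker (q : A -> A) : A -> Prop := fun a => q a = 1.

Definition FAC (B X : A -> Prop) : Prop :=
  proper_subgroup B /\ subgroup X /\
  (forall a, B a -> X a -> a = 1) /\
  (forall a, exists b x, B b /\ X x /\ a = b * x).

Definition conjugate (X X' : A -> Prop) : Prop :=
  exists g, forall x, X' x <-> X (ginv A g * x * g).

(* the equivalence defining Fac(A) = FAC(A)/~ *)
Definition fac_equiv (B X B' X' : A -> Prop) : Prop :=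
  same_set B B' /\ conjugate X X'.

(* elements of the disjoint union over proper subgroups B of Z^1(T^l_{i_B},(B,m_B)) *)
Record DescElt := MkDescElt {
  dB : A -> Prop;
  dq : A -> A;
  dB_proper : proper_subgroup dB;
  dq_ZL : ZL dB dq
}.

(* the equivalence whose quotient is the disjoint union of the Desc^1 sets:
   same index B, and q ~ q' in Desc^1 *)
Definition desc_equiv (d d' : DescElt) : Prop :=
  same_set (dB d) (dB d') /\ desc_rel (dB d) (dq d) (dq d').

(* "q |-> Ker q" (i.e. (B,[q]) |-> [(B, Ker q)]) induces a well-defined
   bijection  (disjoint union of Desc^1) -> Fac(A):
   it lands in FAC, respects the equivalences, reflects them (injective),
   and hits every class (surjective). *)
Definition ker_induces_bijection : Prop :=
  (forall d : DescElt, FAC (dB d) (Ker (dq d))) /\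
  (forall d d' : DescElt, desc_equiv d d' ->
      fac_equiv (dB d) (Ker (dq d)) (dB d') (Ker (dq d'))) /\
  (forall d d' : DescElt,
      fac_equiv (dB d) (Ker (dq d)) (dB d') (Ker (dq d')) -> desc_equiv d d') /\
  (forall B X, FAC B X ->
      exists d : DescElt, fac_equiv (dB d) (Ker (dq d)) B X).

End Defs.

(* A cocycle q : A -> B is a B-equivariant retraction of A onto B (ZL2 with a := 1 gives
   q b = b), so every a factors as a = q a * (q a)^-1 a with the second factor in Ker q, and
   ZL3 makes Ker q a subgroup: this gives the exact factorization A = B (Ker q).  Conversely,
   an exact factorization A = B X determines the cocycle "left factor of a", whose kernel is
   X.  Changing q to the equivalent cocycle a |-> q (a b0^-1) b0 conjugates the kernel by
   b0, and conversely a conjugating element g = b k (b in B, k in Ker q) exhibits the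
   cocycles as equivalent through b0 := b^-1. *)
From Stdlib Require Import ClassicalEpsilon.

Set Implicit Arguments.
Unset Strict Implicit.

Section GroupLaws.
Variable A : group.
Local Notation "x * y" := (gmul A x y).
Local Notation "1" := (gone A).
Local Notation inv := (ginv A).

Lemma mulgAr x y z : (x * y) * z = x * (y * z).
Proof. symmetry; apply gmulA. Qed.

Lemma mulKg x y : inv x * (x * y) = y.
Proof. rewrite gmulA, gmulV, gmul1; reflexivity. Qed.

Lemma mulgI x y z : x * y = x * z -> y = z.
Proof. intro E; rewrite <- (mulKg x y), <- (mulKg x z), E; reflexivity. Qed.
Arguments mulgI x {y z}.

Lemma mulgV x : x * inv x = 1.
Proof.
  (* x * x^-1 is idempotent, and the only idempotent of a group is 1. *)
  set (e := x * inv x).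
  assert (He : e * e = e) by (unfold e; rewrite mulgAr, mulKg; reflexivity).
  rewrite <- (mulKg e e), He; apply gmulV.
Qed.

Lemma mulg1 x : x * 1 = x.
Proof. rewrite <- (gmulV A x), gmulA, mulgV, gmul1; reflexivity. Qed.

Lemma mulKVg x y : x * (inv x * y) = y.
Proof. rewrite gmulA, mulgV, gmul1; reflexivity. Qed.

Lemma invgK x : inv (inv x) = x.
Proof. apply (mulgI (inv x)); rewrite mulgV, gmulV; reflexivity. Qed.

Lemma invMg x y : inv (x * y) = inv y * inv x.
Proof. apply (mulgI (x * y)); rewrite mulgV, mulgAr, mulKVg, mulgV; reflexivity. Qed.

Lemma invg1 : inv 1 = 1.
Proof. rewrite <- (mulg1 (inv 1)); apply gmulV. Qed.

Lemma mulg_eq1C x y : x * y = 1 -> y * x = 1.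
Proof.
  intro E; apply (mulgI x); rewrite <- mulgAr, E, gmul1, mulg1; reflexivity.
Qed.

Lemma subgroup1 (S : A -> Prop) : subgroup A S -> S 1.
Proof. intros [H1 _]; exact H1. Qed.

Lemma subgroupM (S : A -> Prop) x y : subgroup A S -> S x -> S y -> S (x * y).
Proof. intros (_ & HM & _); apply HM. Qed.

Lemma subgroupV (S : A -> Prop) x : subgroup A S -> S x -> S (inv x).
Proof. intros (_ & _ & HV); apply HV. Qed.

End GroupLaws.

Arguments mulgI {A} x {y z}.

#[global] Hint Rewrite mulgAr mulKg mulKVg mulgV gmulV gmul1 mulg1 invgK invMg invg1 : group_simpl.
Ltac group_simpl := autorewrite with group_simpl in *.

Section Cocycles.
Variable A : group.
Local Notation "x * y" := (gmul A x y).
Local Notation "1" := (gone A).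
Local Notation inv := (ginv A).

Lemma ZL_same_set (B B' : A -> Prop) q : same_set A B B' -> ZL A B' q -> ZL A B q.
Proof.
  intros EB (HqB & Hq1 & HqM & HqK); repeat split; auto.
  - intro a; apply EB; auto.
  - intros a b Hb; apply HqM, EB, Hb.
Qed.

Variables (B : A -> Prop) (q : A -> A).
Hypotheses (HB : subgroup A B) (Hq : ZL A B q).

Lemma ZL_fix b : B b -> q b = b.
Proof.
  destruct Hq as (_ & Hq1 & HqM & _); intro Hb.
  rewrite <- (mulg1 b) at 1; rewrite HqM, Hq1, mulg1 by exact Hb; reflexivity.
Qed.

Lemma Ker_subgroup : subgroup A (Ker A q).
Proof.
  destruct Hq as (_ & Hq1 & _ & HqK); unfold Ker; repeat split.
  - exact Hq1.
  - intros x y Hx Hy; rewrite HqK, Hy, mulg1; exact Hx.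
  - intros x Hx; transitivity (q (inv x * q x)); [rewrite Hx, mulg1; reflexivity |].
    rewrite <- HqK, gmulV; exact Hq1.
Qed.

Lemma Ker_meet a : B a -> Ker A q a -> a = 1.
Proof. intros Ha Hk; unfold Ker in Hk; rewrite ZL_fix in Hk; assumption. Qed.

Lemma Ker_cofactor a : Ker A q (inv (q a) * a).
Proof.
  destruct Hq as (HqB & _ & HqM & _); unfold Ker.
  rewrite HqM by exact (subgroupV HB (HqB a)); apply gmulV.
Qed.

Lemma desc_rel_conjugate_Ker q' : desc_rel A B q q' -> conjugate A (Ker A q) (Ker A q').
Proof.
  destruct Hq as (_ & _ & HqM & _); intros (b0 & Hb0 & Eq).
  exists (inv b0); intro x; unfold Ker; group_simpl.
  assert (Ex : q' x = q (x * inv b0) * b0) by (rewrite Eq; group_simpl; reflexivity).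
  rewrite Ex, (HqM _ b0) by exact Hb0; split; apply mulg_eq1C.
Qed.

Lemma conjugate_Ker_desc_rel q' :
  ZL A B q' -> conjugate A (Ker A q) (Ker A q') -> desc_rel A B q q'.
Proof.
  intros (_ & _ & HqM' & _) [g Hg].
  pose proof Hq as (HqB & _ & _ & _).
  (* write g = b k with b in B and k in Ker q, and take b0 := b^-1 *)
  set (b := q g); set (k := inv b * g).
  assert (Eg : g = b * k) by (unfold k; group_simpl; reflexivity).
  exists (inv b); split; [exact (subgroupV HB (HqB g)) |]; intro a.
  set (y := inv (q a) * a).
  assert (Ea : a * inv b = (q a * inv b) * (b * y * inv b))
    by (unfold y; group_simpl; reflexivity).
  assert (Hk : Ker A q' (b * y * inv b)).
  { apply Hg; rewrite Eg; group_simpl.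
    apply (subgroupM Ker_subgroup); [exact (subgroupV Ker_subgroup (Ker_cofactor g)) |].
    apply (subgroupM Ker_subgroup); [exact (Ker_cofactor a) | exact (Ker_cofactor g)]. }
  rewrite Ea, HqM', Hk, mulg1; [reflexivity |].
  exact (subgroupM HB (HqB a) (subgroupV HB (HqB g))).
Qed.

End Cocycles.

Lemma ker_FAC (A : group) (B : A -> Prop) q :
  proper_subgroup A B -> ZL A B q -> FAC A B (Ker A q).
Proof.
  intros HP Hq; pose proof HP as [HB _]; pose proof Hq as (HqB & _).
  split; [exact HP | split; [exact (Ker_subgroup Hq) | split; [exact (Ker_meet Hq) |]]].
  intro a; exists (q a), (gmul A (ginv A (q a)) a); split; [apply HqB | split].
  - exact (Ker_cofactor HB Hq a).
  - group_simpl; reflexivity.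
Qed.

Section ExactFactorization.
Variable A : group.
Local Notation "x * y" := (gmul A x y).
Local Notation "1" := (gone A).
Local Notation inv := (ginv A).

Definition left_factor (B X : A -> Prop) (a : A) : A :=
  epsilon (inhabits 1) (fun b => B b /\ exists x, X x /\ a = b * x).

Variables B X : A -> Prop.
Hypotheses (HB : subgroup A B) (HX : subgroup A X).
Hypothesis HBX : forall a, B a -> X a -> a = 1.
Hypothesis HBX_cover : forall a, exists b x, B b /\ X x /\ a = b * x.

Lemma left_factor_spec a :
  B (left_factor B X a) /\ exists x, X x /\ a = left_factor B X a * x.
Proof.
  apply (epsilon_spec (inhabits 1) (fun b => B b /\ exists x, X x /\ a = b * x)).
  destruct (HBX_cover a) as (b & x & Hb & Hx & E); eauto.
Qed.

Lemma factorization_unique b x b' x' :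
  B b -> X x -> B b' -> X x' -> b * x = b' * x' -> b = b'.
Proof.
  intros Hb Hx Hb' Hx' E.
  assert (Ec : inv b' * b = x' * inv x).
  { apply (mulgI b'); apply (f_equal (fun z => z * inv x)) in E.
    group_simpl; exact E. }
  assert (H1 : inv b' * b = 1).
  { apply HBX; [exact (subgroupM HB (subgroupV HB Hb') Hb) |].
    rewrite Ec; exact (subgroupM HX Hx' (subgroupV HX Hx)). }
  rewrite <- (mulKVg b' b), H1, mulg1; reflexivity.
Qed.

Lemma left_factor_eq a b x : B b -> X x -> a = b * x -> left_factor B X a = b.
Proof.
  intros Hb Hx Ea; destruct (left_factor_spec a) as (Hl & x' & Hx' & Ea').
  apply (factorization_unique Hl Hx' Hb Hx); rewrite <- Ea', <- Ea; reflexivity.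
Qed.

Lemma left_factor_ZL : ZL A B (left_factor B X).
Proof.
  repeat split.
  - intro a; apply left_factor_spec.
  - apply (left_factor_eq (subgroup1 HB) (subgroup1 HX)); group_simpl; reflexivity.
  - intros a b Hb; destruct (left_factor_spec a) as (Ha & x & Hx & Ea).
    apply (left_factor_eq (subgroupM HB Hb Ha) Hx); rewrite Ea at 1; group_simpl; reflexivity.
  - intros a a'; destruct (left_factor_spec a') as (_ & x & Hx & Ea').
    destruct (left_factor_spec (a * left_factor B X a')) as (Hc & y & Hy & Ec).
    apply (left_factor_eq Hc (subgroupM HX Hy Hx)).
    rewrite Ea' at 1; rewrite <- mulgAr, Ec at 1; group_simpl; reflexivity.
Qed.

Lemma Ker_left_factor x : Ker A (left_factor B X) x <-> X x.
Proof.
  unfold Ker; split; intro H.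
  - destruct (left_factor_spec x) as (_ & x' & Hx' & Ex).
    rewrite H, gmul1 in Ex; rewrite Ex; exact Hx'.
  - apply (left_factor_eq (subgroup1 HB) H); group_simpl; reflexivity.
Qed.

End ExactFactorization.

Theorem theorem4p9 : forall A : group, ker_induces_bijection A.
Proof.
  intro A; split; [| split; [| split]].
  - intros [B q HP Hq]; exact (ker_FAC HP Hq).
  - intros [B q HP Hq] d' [EB Hrel]; simpl in *.
    split; [exact EB | exact (desc_rel_conjugate_Ker Hq Hrel)].
  - intros [B q HP Hq] [B' q' HP' Hq'] [EB Hconj]; simpl in *.
    pose proof HP as [HB _]; split; [exact EB |].
    exact (conjugate_Ker_desc_rel HB Hq (ZL_same_set EB Hq') Hconj).
  - intros B X (HP & HX & HBX & Hcover); pose proof HP as [HB _].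
    exists (MkDescElt HP (left_factor_ZL HB HX HBX Hcover)); simpl.
    split; [intro; tauto |].
    exists (gone A); intro x; group_simpl.
    symmetry; exact (Ker_left_factor HB HX HBX Hcover x).
Qed.
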